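(* Let $G$ be a connected graph of order $n\ge 3$. If $px_n(G)=2$, then $G$ is traceable (i.e. $G$ has a Hamilton path).
   Context: All graphs are finite, simple, undirected and connected. An edge-coloring of a graph assigns a color to each edge (adjacent edges may receive the same color). A tree in an edge-colored graph is proper if any two adjacent edges of the tree receive different colors. For $S\subseteq V(G)$, an $S$-tree is a subgraph of $G$ that is a tree containing all vertices of $S$. For a connected graph $G$ of order $n$ and an integer $k$ with $2\le k\le n$, an edge-coloring of $G$ is a $k$-proper coloring if for every set $S$ of $k$ vertices of $G$ there exists a proper $S$-tree in $G$. The $k$-proper index $px_k(G)$ is the minimum number of colors used in a $k$-proper coloring of $G$. *)

From mathcomp Require Import all_boot.
Set Implicit Arguments. Unset Strict Implicit. Unset Printing Implicit Defensive.

Definition simple_graph (T : finType) (e : rel T) : Prop :=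
  symmetric e /\ irreflexive e.

Definition connected_graph (T : finType) (e : rel T) : Prop :=
  forall x y : T, connect e x y.

(* An edge-colouring: a colour for each (unordered) edge, given as a
   symmetric function on pairs (values on non-edges are irrelevant). *)
Definition edge_coloring (T : finType) (c : T -> T -> nat) : Prop :=
  forall x y, c x y = c y x.

Definition uses_at_most (T : finType) (e : rel T) (c : T -> T -> nat) (m : nat) : Prop :=
  exists C : seq nat, size C <= m /\
    forall x y, e x y -> c x y \in C.

Definition subgraph (T : finType) (e : rel T) (A : {set T}) (f : rel T) : Prop :=
  symmetric f /\ forall x y, f x y -> [/\ e x y, x \in A & y \in A].

(* (A, f) is a tree: nonempty, connected (inside A via f), and with exactly
   #|A| - 1 (unordered) edges, i.e. 2 (#|A| - 1) ordered pairs. *)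
Definition is_tree (T : finType) (A : {set T}) (f : rel T) : Prop :=
  A != set0 /\
  (forall x y, x \in A -> y \in A -> connect f x y) /\
  #|[set p : T * T | f p.1 p.2]| = 2 * (#|A| - 1).

Definition proper_tree (T : finType) (c : T -> T -> nat) (f : rel T) : Prop :=
  forall x y z, f x y -> f x z -> y != z -> c x y != c x z.

Definition proper_S_tree (T : finType) (e : rel T) (c : T -> T -> nat)
    (S : {set T}) : Prop :=
  exists (A : {set T}) (f : rel T),
    [/\ subgraph e A f, is_tree A f, S \subset A & proper_tree c f].

Definition k_proper_coloring (T : finType) (e : rel T) (k : nat)
    (c : T -> T -> nat) : Prop :=
  edge_coloring c /\
  forall S : {set T}, #|S| = k -> proper_S_tree e c S.

Definition proper_index_eq (T : finType) (e : rel T) (k m : nat) : Prop :=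
  (exists c, k_proper_coloring e k c /\ uses_at_most e c m) /\
  (forall c m', k_proper_coloring e k c -> uses_at_most e c m' -> m <= m').

Definition traceable (T : finType) (e : rel T) : Prop :=
  exists (x : T) (p : seq T),
    [/\ path e x p, uniq (x :: p) & forall y : T, y \in x :: p].

From mathcomp Require Import all_boot zify.

Set Implicit Arguments.
Unset Strict Implicit.
Unset Printing Implicit Defensive.

(** Taking S to be the whole vertex set, a 2-colour n-proper colouring yields a
    proper spanning tree. The tree edges at a vertex carry pairwise distinct
    colours, so every vertex has tree degree at most 2. A connected graph of
    maximum degree at most 2 is traceable: a path that misses a vertex has an
    edge leaving it, and this edge must start at an end of the path (an inner
    vertex already has two neighbours on the path), so the path can be
    extended. *)

Lemma proper_tree_degree (T : finType) (c : T -> T -> nat) (f : rel T)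
    (C : seq nat) (v : T) :
  proper_tree c f -> (forall w, f v w -> c v w \in C) ->
  #|[set w | f v w]| <= size C.
Proof.
move=> proper_cf colC; rewrite cardE -(size_map (c v)).
apply: uniq_leq_size => [|z /mapP [w]]; last first.
  by rewrite mem_enum inE => /colC + ->.
rewrite map_inj_in_uniq ?enum_uniq // => w1 w2.
rewrite !mem_enum !inE => fvw1 fvw2; apply: contra_eq.
exact: proper_cf.
Qed.

Lemma traceable_subrel (T : finType) (f e : rel T) :
  subrel f e -> traceable f -> traceable e.
Proof.
move=> fe [x [p [fp up cover]]]; exists x, p; split=> //.
exact: sub_path fp.
Qed.

Section MaxDegreeTwo.

Variables (T : finType) (f : rel T).
Hypotheses (fsym : symmetric f) (fconn : forall x y, connect f x y).
Hypothesis fdeg2 : forall v, #|[set w | f v w]| <= 2.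

Lemma path_exit (A : pred T) x p : path f x p -> x \in A -> last x p \notin A ->
  exists v w, [/\ v \in A, w \notin A & f v w].
Proof.
elim: p x => [|y p IHp] x /=; first by move=> _ ->.
move=> /andP [fxy fp] xA; case yA: (y \in A); first exact: IHp.
by exists x, y; rewrite yA.
Qed.

Lemma no_three_neighbours v a b d :
  f v a -> f v b -> f v d -> uniq [:: a; b; d] -> False.
Proof.
move=> fva fvb fvd /card_uniqP card_abd.
have: #|[:: a; b; d]| <= #|[set w | f v w]|.
  by apply/subset_leq_card/subsetP => w; rewrite !inE => /or3P [] /eqP ->.
by rewrite card_abd => /leq_trans /(_ (fdeg2 v)).
Qed.

Lemma inner_vertex_neighbours x p v :
  path f x p -> uniq (x :: p) -> v \in p -> v != last x p ->
  exists a u, [/\ f v a, f v u, a != u, a \in x :: p & u \in x :: p].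
Proof.
move=> + + v_p; case/splitPr: v_p => p1 p2.
case: p2 => [|u p2]; first by rewrite last_cat eqxx.
rewrite cat_path -cat_cons => /and3P [_ fav /andP [fvu _]] up _.
exists (last x p1), u; split=> //; first by rewrite fsym.
- move: up; rewrite cat_uniq => /and3P [_ /hasPn /(_ u) + _].
  by rewrite !inE eqxx orbT => /(_ isT); apply: contraNneq => <-; apply: mem_last.
- by rewrite mem_cat mem_last.
- by rewrite mem_cat !inE eqxx !orbT.
Qed.

Lemma extend_path x p : path f x p -> uniq (x :: p) -> (exists y, y \notin x :: p) ->
  exists x' p', [/\ path f x' p', uniq (x' :: p') & size p < size p'].
Proof.
move=> fp up [y y_out].
have [v [w [v_in w_out fvw]]] : exists v w, [/\ v \in x :: p, w \notin x :: p & f v w].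
  have /connectP [q fq y_last] := fconn x y.
  by apply: path_exit fq _ _; rewrite ?mem_head // -y_last.
have [v_x | v_ne_x] := eqVneq v x.
  by rewrite v_x in fvw; exists w, (x :: p); rewrite /= fsym fvw fp w_out.
have [v_last | v_not_last] := eqVneq v (last x p).
  exists x, (rcons p w); rewrite rcons_path fp -v_last fvw size_rcons.
  by rewrite -rcons_cons rcons_uniq w_out up.
have v_p : v \in p by move: v_in; rewrite inE (negPf v_ne_x).
have [a [u [fva fvu a_u a_in u_in]]] := inner_vertex_neighbours fp up v_p v_not_last.
case: (no_three_neighbours fva fvu fvw).
by rewrite /= !inE negb_or a_u (memPn w_out a a_in) (memPn w_out u u_in).
Qed.

Lemma traceable_from_path n x p :
  #|T| - size p <= n -> path f x p -> uniq (x :: p) -> traceable f.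
Proof.
elim: n x p => [|n IHn] x p size_p fp up.
  by move: (max_card (mem (x :: p))) size_p; rewrite (card_uniqP up) /=; lia.
have [cover | /forallPn uncovered] := boolP [forall y, y \in x :: p].
  by exists x, p; split=> // y; move/forallP: cover.
have [x' [p' [fp' up' longer]]] := extend_path fp up uncovered.
by apply: (IHn x' p') => //; lia.
Qed.

Lemma traceable_max_degree2 (x : T) : traceable f.
Proof. by apply: (@traceable_from_path #|T| x [::]); rewrite ?subn0. Qed.

End MaxDegreeTwo.

Theorem mainTheorem5 (T : finType) (e : rel T) :
  simple_graph e -> connected_graph e -> 3 <= #|T| ->
  proper_index_eq e #|T| 2 -> traceable e.
Proof.
move=> _ _ T_ge3 [[c [[_ c_proper] [C [size_C colC]]]] _].
have [A [t [[tsym t_sub] [_ [t_conn _]] /subsetP sA t_proper]]] :=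
  c_proper setT (cardsT T).
have te : subrel t e by move=> x y /t_sub [].
have inA x : x \in A by apply: sA; rewrite inE.
have [x _] : exists x : T, x \in T by apply/card_gt0P; apply: leq_trans T_ge3.
apply: (traceable_subrel te); apply: (traceable_max_degree2 tsym) => [y z|v|//].
  exact: t_conn.
apply: leq_trans size_C.
by apply: proper_tree_degree t_proper _ => w /te /colC.
Qed.
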